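(* For every bad normalized fully ternary string $s\neq 0212$ of length $n$ ending in $2$, $d_{\rm s}(s)=n-2$.
   Context: Strings are finite words over $\{0,1,2,\dots\}$. A string is \emph{normalized} if no two adjacent symbols are equal; the \emph{normalization} of a string replaces every maximal run of identical symbols by a single copy. A string is \emph{fully $k$-ary} if the set of symbols occurring in it is exactly $\{0,\dots,k-1\}$; fully ternary means fully $3$-ary. For a normalized string $s=s_1\cdots s_n$ and $1\le i\le n$, the flip $f^{(i)}(s)$ is the normalization of $s_i\cdots s_1 s_{i+1}\cdots s_n$. The sorting distance $d_{\rm s}(s)$ of a normalized fully ternary string is the minimum number of flips needed to transform $s$ into $012$. Regular-expression notation: $w^i$ is $i$ repetitions of $w$, $w^*$ is zero or more, $w^+$ one or more, $w^{\ge 2}$ two or more repetitions; $\{a,b\}$ denotes a single symbol that is either $a$ or $b$ (chosen independently at each occurrence). A normalized fully ternary string ending in $2$ is \emph{bad} (for sorting; no relabelling allowed) if it is of one of the following types: (I) $0(12)^{\ge 2}$; (II) $(\{0,1\}2)^+$ or $2(\{0,1\}2)^+$; (III) $(\{1,2\}0)^+2$ or $0(\{1,2\}0)^+2$; (IV) $(\{1,2\}0)^+12$ or $(0\{1,2\})^+012$, in either case containing at least two occurrences of $2$; (V) $(01)^*0212$ or $(10)^+212$; (VI) $1(20)^+1(20)^*2$ or $0(21)^+0(21)^*2$; (VII) $1(02)^+1(02)^+$; (VIII) $1(02)^+12$; (IX) one of the following 77 strings: 210212, 021012, 212012, 120102, 201202, 0210202, 1021202, 0212012, 2120102, 0102102,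 1212012, 2010212, 0120212, 1201012, 1201212, 2012012, 10210212, 21021212, 02102012, 02101212, 10212012, 02121012, 02120102, 10102102, 02010212, 21202012, 21201012, 21201202, 20210212, 01021202, 01020212, 20212012, 12120102, 12010212, 12010202, 20120102, 12012012, 021021202, 102120102, 102010212, 021202012, 021201012, 020210212, 101020212, 020212012, 212010202, 212012012, 010210212, 010210202, 010212012, 202010212, 121202012, 121201202, 201021202, 120212012, 012021212, 120102012, 201202012, 120120212, 201201012, 0210212012, 1021202012, 1021201012, 1020210212, 1010210202, 0202010212, 2120202012, 2120102012, 2021021212, 2010212012, 1201021202, 1201202012, 10202010212, 02120102012, 02021021212, 21201202012, 12120202012. All other normalized fully ternary strings ending in $2$ are \emph{good}. *)

From mathcomp Require Import all_boot.
Set Implicit Arguments. Unset Strict Implicit. Unset Printing Implicit Defensive.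

Fixpoint normalize (s : seq nat) : seq nat :=
  match s with
  | [::] => [::]
  | x :: s' =>
      match normalize s' with
      | [::] => [:: x]
      | y :: t => if x == y then y :: t else x :: y :: t
      end
  end.

Definition normalized (s : seq nat) : Prop := sorted (fun a b => a != b) s.

Definition fully_kary (k : nat) (s : seq nat) : Prop :=
  forall x : nat, (x \in s) = (x < k).

Definition fully_ternary (s : seq nat) : Prop := fully_kary 3 s.

Definition flip (i : nat) (s : seq nat) : seq nat :=
  normalize (rev (take i s) ++ drop i s).

Fixpoint apply_flips (idx : seq nat) (s : seq nat) : option (seq nat) :=
  match idx with
  | [::] => Some s
  | i :: idx' => if (1 <= i) && (i <= size s) then apply_flips idx' (flip i s)
                else None
  end.

Definition sorts_in (k : nat) (s : seq nat) : Prop :=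
  exists idx : seq nat, size idx = k /\ apply_flips idx s = Some [:: 0; 1; 2].

Definition sorting_distance_is (s : seq nat) (d : nat) : Prop :=
  sorts_in d s /\ forall k, sorts_in k s -> d <= k.

Inductive re : Type :=
  | REps
  | RSym of seq nat
  | RCat of re & re
  | RStar of re.

Inductive matches : re -> seq nat -> Prop :=
  | M_eps : matches REps [::]
  | M_sym (A : seq nat) (a : nat) : a \in A -> matches (RSym A) [:: a]
  | M_cat (r1 r2 : re) (u v : seq nat) :
      matches r1 u -> matches r2 v -> matches (RCat r1 r2) (u ++ v)
  | M_star0 (r : re) : matches (RStar r) [::]
  | M_starS (r : re) (u v : seq nat) :
      matches r u -> matches (RStar r) v -> matches (RStar r) (u ++ v).

Fixpoint RWord (w : seq nat) : re :=
  match w with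
  | [::] => REps
  | a :: w' => RCat (RSym [:: a]) (RWord w')
  end.

Definition RPlus (r : re) : re := RCat r (RStar r).
Definition RGe2 (r : re) : re := RCat r (RCat r (RStar r)).

Notation "r1 ';;' r2" := (RCat r1 r2) (at level 40, left associativity).

Definition typeI (s : seq nat) : Prop :=
  matches (RWord [:: 0] ;; RGe2 (RWord [:: 1; 2])) s.

Definition typeII (s : seq nat) : Prop :=
  matches (RPlus (RSym [:: 0; 1] ;; RWord [:: 2])) s \/
  matches (RWord [:: 2] ;; RPlus (RSym [:: 0; 1] ;; RWord [:: 2])) s.

Definition typeIII (s : seq nat) : Prop :=
  matches (RPlus (RSym [:: 1; 2] ;; RWord [:: 0]) ;; RWord [:: 2]) s \/
  matches (RWord [:: 0] ;; RPlus (RSym [:: 1; 2] ;; RWord [:: 0]) ;; RWord [:: 2]) s.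

Definition typeIV (s : seq nat) : Prop :=
  (matches (RPlus (RSym [:: 1; 2] ;; RWord [:: 0]) ;; RWord [:: 1; 2]) s \/
   matches (RPlus (RWord [:: 0] ;; RSym [:: 1; 2]) ;; RWord [:: 0; 1; 2]) s) /\
  2 <= count_mem 2 s.

Definition typeV (s : seq nat) : Prop :=
  matches (RStar (RWord [:: 0; 1]) ;; RWord [:: 0; 2; 1; 2]) s \/
  matches (RPlus (RWord [:: 1; 0]) ;; RWord [:: 2; 1; 2]) s.

Definition typeVI (s : seq nat) : Prop :=
  matches (RWord [:: 1] ;; RPlus (RWord [:: 2; 0]) ;; RWord [:: 1]
           ;; RStar (RWord [:: 2; 0]) ;; RWord [:: 2]) s \/
  matches (RWord [:: 0] ;; RPlus (RWord [:: 2; 1]) ;; RWord [:: 0]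
           ;; RStar (RWord [:: 2; 1]) ;; RWord [:: 2]) s.

Definition typeVII (s : seq nat) : Prop :=
  matches (RWord [:: 1] ;; RPlus (RWord [:: 0; 2]) ;; RWord [:: 1]
           ;; RPlus (RWord [:: 0; 2])) s.

Definition typeVIII (s : seq nat) : Prop :=
  matches (RWord [:: 1] ;; RPlus (RWord [:: 0; 2]) ;; RWord [:: 1; 2]) s.

Definition type9_strings : seq (seq nat) := [::
  [:: 2; 1; 0; 2; 1; 2];
  [:: 0; 2; 1; 0; 1; 2];
  [:: 2; 1; 2; 0; 1; 2];
  [:: 1; 2; 0; 1; 0; 2];
  [:: 2; 0; 1; 2; 0; 2];
  [:: 0; 2; 1; 0; 2; 0; 2];
  [:: 1; 0; 2; 1; 2; 0; 2];
  [:: 0; 2; 1; 2; 0; 1; 2];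
  [:: 2; 1; 2; 0; 1; 0; 2];
  [:: 0; 1; 0; 2; 1; 0; 2];
  [:: 1; 2; 1; 2; 0; 1; 2];
  [:: 2; 0; 1; 0; 2; 1; 2];
  [:: 0; 1; 2; 0; 2; 1; 2];
  [:: 1; 2; 0; 1; 0; 1; 2];
  [:: 1; 2; 0; 1; 2; 1; 2];
  [:: 2; 0; 1; 2; 0; 1; 2];
  [:: 1; 0; 2; 1; 0; 2; 1; 2];
  [:: 2; 1; 0; 2; 1; 2; 1; 2];
  [:: 0; 2; 1; 0; 2; 0; 1; 2];
  [:: 0; 2; 1; 0; 1; 2; 1; 2];
  [:: 1; 0; 2; 1; 2; 0; 1; 2];
  [:: 0; 2; 1; 2; 1; 0; 1; 2];
  [:: 0; 2; 1; 2; 0; 1; 0; 2];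
  [:: 1; 0; 1; 0; 2; 1; 0; 2];
  [:: 0; 2; 0; 1; 0; 2; 1; 2];
  [:: 2; 1; 2; 0; 2; 0; 1; 2];
  [:: 2; 1; 2; 0; 1; 0; 1; 2];
  [:: 2; 1; 2; 0; 1; 2; 0; 2];
  [:: 2; 0; 2; 1; 0; 2; 1; 2];
  [:: 0; 1; 0; 2; 1; 2; 0; 2];
  [:: 0; 1; 0; 2; 0; 2; 1; 2];
  [:: 2; 0; 2; 1; 2; 0; 1; 2];
  [:: 1; 2; 1; 2; 0; 1; 0; 2];
  [:: 1; 2; 0; 1; 0; 2; 1; 2];
  [:: 1; 2; 0; 1; 0; 2; 0; 2];
  [:: 2; 0; 1; 2; 0; 1; 0; 2];
  [:: 1; 2; 0; 1; 2; 0; 1; 2];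
  [:: 0; 2; 1; 0; 2; 1; 2; 0; 2];
  [:: 1; 0; 2; 1; 2; 0; 1; 0; 2];
  [:: 1; 0; 2; 0; 1; 0; 2; 1; 2];
  [:: 0; 2; 1; 2; 0; 2; 0; 1; 2];
  [:: 0; 2; 1; 2; 0; 1; 0; 1; 2];
  [:: 0; 2; 0; 2; 1; 0; 2; 1; 2];
  [:: 1; 0; 1; 0; 2; 0; 2; 1; 2];
  [:: 0; 2; 0; 2; 1; 2; 0; 1; 2];
  [:: 2; 1; 2; 0; 1; 0; 2; 0; 2];
  [:: 2; 1; 2; 0; 1; 2; 0; 1; 2];
  [:: 0; 1; 0; 2; 1; 0; 2; 1; 2];
  [:: 0; 1; 0; 2; 1; 0; 2; 0; 2];
  [:: 0; 1; 0; 2; 1; 2; 0; 1; 2];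
  [:: 2; 0; 2; 0; 1; 0; 2; 1; 2];
  [:: 1; 2; 1; 2; 0; 2; 0; 1; 2];
  [:: 1; 2; 1; 2; 0; 1; 2; 0; 2];
  [:: 2; 0; 1; 0; 2; 1; 2; 0; 2];
  [:: 1; 2; 0; 2; 1; 2; 0; 1; 2];
  [:: 0; 1; 2; 0; 2; 1; 2; 1; 2];
  [:: 1; 2; 0; 1; 0; 2; 0; 1; 2];
  [:: 2; 0; 1; 2; 0; 2; 0; 1; 2];
  [:: 1; 2; 0; 1; 2; 0; 2; 1; 2];
  [:: 2; 0; 1; 2; 0; 1; 0; 1; 2];
  [:: 0; 2; 1; 0; 2; 1; 2; 0; 1; 2];
  [:: 1; 0; 2; 1; 2; 0; 2; 0; 1; 2];
  [:: 1; 0; 2; 1; 2; 0; 1; 0; 1; 2];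
  [:: 1; 0; 2; 0; 2; 1; 0; 2; 1; 2];
  [:: 1; 0; 1; 0; 2; 1; 0; 2; 0; 2];
  [:: 0; 2; 0; 2; 0; 1; 0; 2; 1; 2];
  [:: 2; 1; 2; 0; 2; 0; 2; 0; 1; 2];
  [:: 2; 1; 2; 0; 1; 0; 2; 0; 1; 2];
  [:: 2; 0; 2; 1; 0; 2; 1; 2; 1; 2];
  [:: 2; 0; 1; 0; 2; 1; 2; 0; 1; 2];
  [:: 1; 2; 0; 1; 0; 2; 1; 2; 0; 2];
  [:: 1; 2; 0; 1; 2; 0; 2; 0; 1; 2];
  [:: 1; 0; 2; 0; 2; 0; 1; 0; 2; 1; 2];
  [:: 0; 2; 1; 2; 0; 1; 0; 2; 0; 1; 2];
  [:: 0; 2; 0; 2; 1; 0; 2; 1; 2; 1; 2];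
  [:: 2; 1; 2; 0; 1; 2; 0; 2; 0; 1; 2];
  [:: 1; 2; 1; 2; 0; 2; 0; 2; 0; 1; 2]].

Definition typeIX (s : seq nat) : Prop := s \in type9_strings.

Definition bad (s : seq nat) : Prop :=
  normalized s /\ fully_ternary s /\ last 0 s = 2 /\
  (typeI s \/ typeII s \/ typeIII s \/ typeIV s \/ typeV s \/
   typeVI s \/ typeVII s \/ typeVIII s \/ typeIX s).

(* Every flip shortens a normalized string by at most one symbol, and only when it
   brings the first symbol next to another copy of itself (a "move").  Hence
   d_s(s) >= n - 3, with equality exactly for the strings that reach 012 by moves
   alone ("tight" strings).  No bad string is tight: moves can only destroy 12- and
   01-adjacencies, so tight strings have both; the shapes "ends in 12, a single
   12-adjacency, at least two 2s" and "ends in 0212, exactly two 2s, two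
   12-adjacencies" cannot be tight either, since a move would carry them down to 012;
   types VI-VIII have a forced first move into one of these situations, and the 77
   exceptional strings are checked by computation.  Conversely n - 2 flips always
   suffice: move while the first symbol recurs; otherwise the string is a followed
   by an alternation of the two other symbols, and one flip of the first two
   symbols makes it tight; strings of length at most 6 are checked exhaustively. *)

From mathcomp Require Import all_boot zify.
Set Implicit Arguments. Unset Strict Implicit. Unset Printing Implicit Defensive.

Local Notation normal := (sorted (fun a b : nat => a != b)).

Lemma normalize_id s : normal s -> normalize s = s.
Proof.
elim: s => //= x s IH Hs; rewrite IH ?(path_sorted Hs) //.
by case: s Hs {IH} => //= y s /andP[/negbTE->].
Qed.

Lemma normalize_cat_dup u a v :
  normalize (u ++ a :: a :: v) = normalize (u ++ a :: v).
Proof.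
elim: u => [|c u /= -> //] /=.
by case: (normalize v) => [|y t] /=; rewrite ?eqxx //; case: eqP => [->|_] /=; rewrite eqxx.
Qed.

Lemma normal_rev u : normal (rev u) = normal u.
Proof.
rewrite rev_sorted; case: u => //= x u.
by apply: eq_path => a b; rewrite eq_sym.
Qed.

Lemma normal_move a x y : normal (a :: x ++ a :: y) -> normal (rev x ++ a :: y).
Proof.
rewrite -cat_cons !sorted_cat_cons => /andP[Hx ->]; rewrite andbT -rev_cons normal_rev.
by move: Hx; rewrite rcons_cons /= rcons_path => /andP[].
Qed.

Lemma flip_cases i s : normal s -> 1 <= i <= size s ->
  normal (flip i s) /\
  (size (flip i s) = size s \/
   exists a x y, s = a :: x ++ a :: y /\ flip i s = rev x ++ a :: y).
Proof.
case: s => [|a w] Hn /andP[]; first by case: i.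
case: i => [|i] // _ Hi; rewrite /flip [take _ _]/= [drop _ _]/= rev_cons cat_rcons.
move: (take i w) (drop i w) (cat_take_drop i w) Hi => x [|b y] <- _ in Hn *.
  rewrite cats1 -rev_cons normalize_id ?normal_rev; last by rewrite cats0 in Hn.
  by split; [rewrite cats0 in Hn | left; rewrite size_rev /= cats0].
have [Eba|Hba] := eqVneq b a.
  subst b; rewrite normalize_cat_dup normalize_id; last exact: normal_move Hn.
  by split; [exact: normal_move Hn | right; exists a, x, y].
have Hm : normal (rev x ++ a :: b :: y).
  rewrite sorted_cat_cons -rev_cons normal_rev /= eq_sym Hba.
  by move: Hn; rewrite /= cat_path => /andP[-> /= /andP[_ ->]].
rewrite normalize_id //; split => //; left.
by rewrite size_cat size_rev /= size_cat /= addnS.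
Qed.

Lemma flip_move a x y : normal (a :: x ++ a :: y) ->
  flip (size x).+1 (a :: x ++ a :: y) = rev x ++ a :: y.
Proof.
move=> Hn; rewrite /flip [take _ _]/= [drop _ _]/= take_size_cat // drop_size_cat //.
by rewrite rev_cons cat_rcons normalize_cat_dup normalize_id //; apply: normal_move.
Qed.

Lemma sorts_in_flip i k s : 1 <= i <= size s -> sorts_in k (flip i s) -> sorts_in k.+1 s.
Proof. by move=> Hi [idx [Hsz Ha]]; exists (i :: idx); rewrite /= Hsz Hi. Qed.

(* Strings that reach [012] by shortening flips only; by [apply_flips_size]
   these are exactly the strings of sorting distance [size s - 3]. *)
Inductive tight : seq nat -> Prop :=
| tight012 : tight [:: 0; 1; 2]
| tight_move a x y : tight (rev x ++ a :: y) -> tight (a :: x ++ a :: y).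

Lemma tight_size s : tight s -> 3 <= size s.
Proof. by elim=> // a x y _; rewrite /= !size_cat size_rev /=; lia. Qed.

Lemma apply_flips_size idx s : normal s -> apply_flips idx s = Some [:: 0; 1; 2] ->
  size s <= size idx + 3 /\ (size s = size idx + 3 -> tight s).
Proof.
elim: idx s => [|i idx IH] s Hn /=; first by case=> ->; split => // _; exact: tight012.
case: ifP => // Hi /(IH _ (flip_cases Hn Hi).1) [Hle Htight].
case: (flip_cases Hn Hi).2 => [Hsz|[a [x [y [Es Ef]]]]]; first by split => [|E]; lia.
move: Hle Htight; rewrite Ef Es /= !size_cat size_rev /= => Hle Htight.
by split => [|E]; [lia | apply: tight_move; apply: Htight; lia].
Qed.

Lemma tight_sorts_in s : tight s -> normal s -> sorts_in (size s - 3) s.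
Proof.
elim=> [|a x y Ht IH Hn]; first by exists [::].
have := tight_size Ht; rewrite size_cat size_rev /= => H3.
have -> : size (a :: x ++ a :: y) - 3 = (size (rev x ++ a :: y) - 3).+1.
  by rewrite /= !size_cat size_rev /=; lia.
apply: (@sorts_in_flip (size x).+1); first by rewrite /= size_cat /=; lia.
by rewrite flip_move //; exact: IH (normal_move Hn).
Qed.

Definition edge (p q x y : nat) : bool := ((x == p) && (y == q)) || ((x == q) && (y == p)).

Fixpoint adj (p q : nat) (s : seq nat) : nat :=
  match s with
  | x :: ((y :: _) as r) => edge p q x y + adj p q r
  | _ => 0
  end.

Lemma adj_cons2 p q x y r : adj p q [:: x, y & r] = edge p q x y + adj p q (y :: r).
Proof. by []. Qed.
Arguments adj p q s : simpl never.

Lemma edgeC p q x y : edge p q x y = edge p q y x.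
Proof. by rewrite /edge orbC andbC [(y == q) && _]andbC. Qed.

Lemma edge_sym p q x y : edge p q x y = edge q p x y.
Proof. by rewrite /edge orbC. Qed.

Lemma adj_sym p q s : adj p q s = adj q p s.
Proof.
elim: s => [|x [|y s] IH] //; by rewrite !adj_cons2 IH edge_sym.
Qed.

Lemma adj_cat p q u c v : adj p q (u ++ c :: v) = adj p q (rcons u c) + adj p q (c :: v).
Proof.
elim: u => [|x [|y u] IH]; first by [].
  by rewrite /= !adj_cons2 addn0.
by rewrite !cat_cons adj_cons2 -cat_cons IH !rcons_cons adj_cons2 -rcons_cons addnA.
Qed.

Lemma adj_rcons p q b u c : adj p q (rcons (b :: u) c) = adj p q (b :: u) + edge p q (last b u) c.
Proof.
elim: u b => [|y u IH] b; first by rewrite [rcons _ _]/= adj_cons2 addnC.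
by rewrite !rcons_cons adj_cons2 -rcons_cons IH adj_cons2 addnA.
Qed.

Lemma adj_rev p q u : adj p q (rev u) = adj p q u.
Proof.
elim: u => [|c u IH] //; rewrite rev_cons.
case: u IH => [|d u] // IH.
have [e [w Ew]] : exists e w, rev (d :: u) = e :: w.
  by rewrite rev_cons; case: (rev u) => [|e w] /=; do 2 eexists.
have Hlast : last e w = d by rewrite -(last_cons 0) -Ew rev_cons last_rcons.
by rewrite Ew adj_rcons -Ew IH Hlast adj_cons2 edgeC addnC.
Qed.

Lemma adj_move p q a x y :
  adj p q (a :: x ++ a :: y) = adj p q (rev x ++ a :: y) + edge p q (last a x) a.
Proof. by rewrite -cat_cons !adj_cat adj_rcons -rev_cons adj_rev; lia. Qed.

Lemma adj_split p q c x y : adj p q (rev x ++ c :: y) = adj p q (c :: x) + adj p q (c :: y).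
Proof. by rewrite adj_cat -rev_cons adj_rev. Qed.

Lemma adj_notin p q s : p \notin s -> adj p q s = 0.
Proof.
elim: s => [|x [|y s] IH] //; rewrite !inE negb_or => /andP[Hx Hs].
rewrite adj_cons2 IH // /edge eq_sym (negbTE Hx).
by move: Hs; rewrite negb_or eq_sym => /andP[/negbTE->]; rewrite andbF.
Qed.

Lemma adj_skip p q c u : c != p -> c != q -> adj p q (c :: u) = adj p q u.
Proof.
by case: u => [|y u] // /negbTE Hp /negbTE Hq; rewrite adj_cons2 /edge Hp Hq.
Qed.

Lemma count_move c a x y :
  count_mem c (a :: x ++ a :: y) = count_mem c (rev x ++ a :: y) + (a == c :> nat).
Proof. by rewrite /= !count_cat count_rev /=; lia. Qed.

Lemma tight_adj s : tight s -> 0 < adj 1 2 s /\ 0 < adj 0 1 s.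
Proof. by elim=> // a x y _; rewrite !adj_move; lia. Qed.

Lemma tight_invariant (P : seq nat -> Prop) :
  ~ P [:: 0; 1; 2] ->
  (forall a x y, tight (rev x ++ a :: y) -> P (a :: x ++ a :: y) -> P (rev x ++ a :: y)) ->
  forall s, tight s -> ~ P s.
Proof. by move=> H0 Hstep s; elim=> // a x y Ht IH /(Hstep _ _ _ Ht). Qed.

Lemma suffix_catr_long (w u v : seq nat) : suffix w (u ++ v) -> size w <= size v -> suffix w v.
Proof.
rewrite !suffixE size_cat drop_cat => Hw Hs.
have Hge : size u + size v - size w < size u = false by apply/negbTE; rewrite -leqNgt; lia.
by rewrite Hge (_ : size u + size v - size w - size u = size v - size w) in Hw; last lia.
Qed.

Lemma suffix1_last (c a : nat) x : suffix [:: c] (a :: x) = (last a x == c).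
Proof.
by rewrite -[[:: c]]/(rcons [::] c) [a :: x]lastI suffix_rcons suffix0s andbT eq_sym.
Qed.

Lemma count_suffix (c : nat) w s : suffix w s -> count_mem c w <= count_mem c s.
Proof. by case/suffixP=> r ->; rewrite count_cat leq_addl. Qed.

Definition lone12 s := [/\ suffix [:: 1; 2] s, adj 1 2 s = 1 & 1 < count_mem 2 s].

(* A move keeps the final 12 unless it destroys the only 12-adjacency. *)
Lemma tight_not_lone12 s : tight s -> ~ lone12 s.
Proof.
apply: tight_invariant => [[] //|a x y Ht [Hsuf Hadj Hcnt]].
have [Ht12 _] := tight_adj Ht.
have := adj_move 1 2 a x y; rewrite Hadj => Hm.
have He : edge 1 2 (last a x) a = false by move: Hm; case: edge => /=; lia.
case: y Hsuf Hadj Hm Hcnt Ht Ht12 => [|b y] Hsuf Hadj Hm Hcnt Ht Ht12.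
  move: Hsuf; rewrite -cat_cons -[[:: 1; 2]]/([:: 1] ++ [:: 2]) suffix_catl //.
  by case/andP=> /eqP[Ea]; rewrite suffix1_last => /eqP Hx; rewrite Hx -Ea in He.
have Hb : suffix [:: 2] (b :: y).
  apply: (@suffix_catr_long _ (a :: x ++ [:: a])) => //.
  by rewrite cat_cons -catA; exact: (@catl_suffix _ [:: 1] _ _ Hsuf).
split.
- apply: suffix_catr; apply: (@suffix_catr_long _ (a :: x)) => //.
- by move: Hm; rewrite He addn0.
- move: Hcnt (count_suffix 2 Hb); rewrite count_move count_cat /= count_rev; lia.
Qed.

Definition lone0212 s := [/\ suffix [:: 0; 2; 1; 2] s, count_mem 2 s = 2 & adj 1 2 s = 2].

(* Both 2s lie in the final 0212, so the repeated first symbol is not 2, and a move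
   either keeps the shape or destroys the 21 of 0212 and yields [lone12]. *)
Lemma tight_not_lone0212 s : tight s -> ~ lone0212 s.
Proof.
apply: tight_invariant => [[] //|a x y Ht [Hsuf Hcnt Hadj]].
have Ha : a != 2.
  apply/eqP => Ea; case/suffixP: Hsuf Hcnt => -[|c r] E; rewrite E; first by case: E Ea => ->.
  by case: E => Ec _; rewrite count_cat /= -Ec Ea; lia.
have Hm := adj_move 1 2 a x y; have := count_move 2 a x y; rewrite (negbTE Ha) addn0 => Hc.
move: Hsuf; rewrite -cat_cons; case: y Ht Hadj Hcnt Hm Hc => [|b [|c [|d y]]] Ht Hadj Hcnt Hm Hc.
- rewrite -[[:: 0; 2; 1; 2]]/([:: 0; 2; 1] ++ [:: 2]) suffix_catl //.
  by case/andP=> /eqP[Ea]; rewrite -Ea in Ha.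
- rewrite -[[:: 0; 2; 1; 2]]/([:: 0; 2] ++ [:: 1; 2]) suffix_catl //.
  case/andP=> /eqP[Ea Eb] /(@catl_suffix _ [:: 0]); rewrite suffix1_last => /eqP Hx.
  subst a b; case: (tight_not_lone12 Ht); split; first exact: suffix_suffix.
    by move: Hm; rewrite Hadj Hx /=; lia.
  by rewrite -Hc Hcnt.
- rewrite -[[:: 0; 2; 1; 2]]/([:: 0] ++ [:: 2; 1; 2]) suffix_catl //.
  by case/andP=> /eqP[Ea]; rewrite -Ea in Ha.
- move=> Hsuf; have Htail := suffix_catr_long Hsuf (isT : 4 <= size [:: a, b, c, d & y]).
  have Hx : last a x != 2.
    have Htl : 2 <= count_mem 2 [:: a, b, c, d & y] := count_suffix 2 Htail.
    have : 2 \notin a :: x by apply/count_memPn; move: Hcnt; rewrite -cat_cons count_cat; lia.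
    by apply: contraNneq => <-; exact: mem_last.
  have He : edge 1 2 (last a x) a = false by rewrite /edge (negbTE Hx) (negbTE Ha) !andbF.
  split; [exact: suffix_catr | by rewrite -Hc | by move: Hm; rewrite He Hadj; lia].
Qed.

Lemma inv_sym A u : matches (RSym A) u -> exists2 a, a \in A & u = [:: a].
Proof. by move=> H; inversion H; exists a. Qed.

Lemma inv_cat r1 r2 u : matches (RCat r1 r2) u ->
  exists u1 u2, [/\ matches r1 u1, matches r2 u2 & u = u1 ++ u2].
Proof. by move=> H; inversion H; exists u0, v. Qed.

Lemma matches_star_ind r (P : seq nat -> Prop) :
  P [::] -> (forall u v, matches r u -> P v -> P (u ++ v)) ->
  forall u, matches (RStar r) u -> P u.
Proof.
move=> P0 PS u H; remember (RStar r) as R eqn:ER.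
by elim: H ER => // r' u' v Hu _ _ IH [Er]; subst r'; apply: PS => //; apply: IH.
Qed.

Lemma matches_plus_star r u : matches (RPlus r) u -> matches (RStar r) u.
Proof. by case/inv_cat=> u1 [u2 [H1 H2 ->]]; exact: M_starS. Qed.

Lemma inv_word w u : matches (RWord w) u -> u = w.
Proof.
elim: w u => [|a w IH] u /=; first by move=> H; inversion H.
case/inv_cat=> u1 [u2 [/inv_sym [b] Hb -> /IH -> ->]].
by move: Hb; rewrite inE => /eqP->.
Qed.

Definition rep (w : seq nat) k := flatten (nseq k w).

Lemma rep_S w k : rep w k.+1 = w ++ rep w k.
Proof. by []. Qed.

Lemma rep_Sr w k : rep w k.+1 = rep w k ++ w.
Proof. by elim: k => [|k IH]; [rewrite /rep /= cats0 | rewrite rep_S {1}IH catA]. Qed.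

Lemma size_rep w k : size (rep w k) = size w * k.
Proof. by elim: k => [|k IH]; rewrite ?muln0 // rep_S size_cat IH mulnS. Qed.

Lemma inv_star_word w u : matches (RStar (RWord w)) u -> exists k, u = rep w k.
Proof.
apply: (@matches_star_ind _ (fun u => exists k, u = rep w k)); first by exists 0.
by move=> u1 v /inv_word -> [k ->]; exists k.+1.
Qed.

Lemma inv_plus_word w u : matches (RPlus (RWord w)) u -> exists k, u = rep w k.+1.
Proof. by case/inv_cat=> u1 [u2 [/inv_word -> /inv_star_word [k ->] ->]]; exists k. Qed.

Ltac invert_matches := repeat match goal with
 | H : matches (RWord _) _ |- _ => apply inv_word in H; subst
 | H : matches (RPlus (RWord _)) _ |- _ => let k := fresh "k" in
      destruct (inv_plus_word H) as [k ?]; clear H; subst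
 | H : matches (RStar (RWord _)) _ |- _ => let k := fresh "k" in
      destruct (inv_star_word H) as [k ?]; clear H; subst
 | H : matches (RGe2 _) _ |- _ => unfold RGe2 in H
 | H : matches (RCat _ _) _ |- _ =>
      let u1 := fresh "u" in let u2 := fresh "u" in let H1 := fresh "H" in
      let H2 := fresh "H" in
      destruct (inv_cat H) as [u1 [u2 [H1 H2 ?]]]; clear H; subst
 end.

Lemma notin_rep2 (p q c : nat) k : c != p -> c != q -> c \notin rep [:: p; q] k.
Proof.
move=> Hp Hq; elim: k => [|k IH] //.
by rewrite rep_S mem_cat negb_or IH andbT !inE negb_or Hp Hq.
Qed.

Definition interleave (d : nat) cs := flatten [seq [:: c; d] | c <- cs].

Lemma star_sym_word A d u :
  matches (RStar (RSym A ;; RWord [:: d])) u -> exists cs, u = interleave d cs.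
Proof.
apply: (@matches_star_ind _ (fun u => exists cs, u = interleave d cs)); first by exists [::].
by move=> _ v /inv_cat [_ [_ [/inv_sym [c _ ->] /inv_word -> ->]]] [cs ->]; exists (c :: cs).
Qed.

Lemma star_word_sym A d u :
  matches (RStar (RWord [:: d] ;; RSym A)) u -> exists cs, u ++ [:: d] = d :: interleave d cs.
Proof.
apply: (@matches_star_ind _ (fun u => exists cs, u ++ [:: d] = d :: interleave d cs)).
  by exists [::].
move=> _ v /inv_cat [_ [_ [/inv_word -> /inv_sym [c _ ->] ->]]] [cs Ev].
by exists (c :: cs); rewrite -catA /= Ev.
Qed.

Lemma adj_interleave p q d cs v : d != p -> d != q ->
  adj p q (interleave d cs ++ v) = adj p q v.
Proof.
move=> /negbTE Hp /negbTE Hq; elim: cs => [|c cs IH] //=.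
by rewrite adj_cons2 adj_skip ?Hp ?Hq // /edge Hp Hq !andbF.
Qed.

Lemma tight_head_mem a w : tight (a :: w) -> a :: w = [:: 0; 1; 2] \/ a \in w.
Proof. by move=> H; inversion H; [left | right; rewrite mem_cat inE eqxx orbT]. Qed.

Lemma cat_cons_notin (c : nat) x y x' y' : x ++ c :: y = x' ++ c :: y' ->
  c \notin x' -> c \notin y' -> x = x' /\ y = y'.
Proof.
elim: x x' => [|d x IH] [|d' x'] //=.
- by case=> ->.
- by case=> -> _; rewrite inE eqxx.
- by case=> -> <- _; rewrite mem_cat inE eqxx orbT.
- case=> -> /IH H; rewrite inE negb_or => /andP[_ /H{}H] /H[-> ->] //.
Qed.

Lemma tight_first_move a x y : tight (a :: x ++ a :: y) -> a \notin x -> a \notin y ->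
  tight (rev x ++ a :: y).
Proof.
move=> H Hx Hy; case: {-1}_ / H (erefl (a :: x ++ a :: y)) => [|b x' y' Ht] [Eb E].
  have : a \in x ++ a :: y by rewrite mem_cat mem_head orbT.
  by rewrite E Eb.
by subst b; have [Ex Ey] := cat_cons_notin (esym E) Hx Hy; rewrite -Ex -Ey.
Qed.

Lemma adj_cons_eq0 p q c y : edge p q c (head c y) = false -> p \notin y \/ q \notin y ->
  adj p q (c :: y) = 0.
Proof.
case: y => [|d w] //= He Hn; rewrite adj_cons2 He.
by case: Hn => /adj_notin; [apply | rewrite adj_sym; apply].
Qed.

Lemma typeI_not_tight s : typeI s -> ~ tight s.
Proof.
rewrite /typeI => H; invert_matches.
case/tight_head_mem => [//|]; rewrite !inE /=.
by apply/negP; exact: notin_rep2.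
Qed.

Lemma typeII_adj s : typeII s -> adj 0 1 s = 0.
Proof.
have Halt u : matches (RPlus (RSym [:: 0; 1] ;; RWord [:: 2])) u -> adj 0 1 u = 0.
  by move/matches_plus_star/star_sym_word=> [cs ->]; rewrite -[interleave _ _]cats0 adj_interleave.
by case=> [/Halt //|/inv_cat [w [u [/inv_word -> /Halt Hu ->]]]]; rewrite /= adj_skip.
Qed.

Lemma typeIII_adj s : typeIII s -> adj 1 2 s = 0.
Proof.
have Halt u : matches (RPlus (RSym [:: 1; 2] ;; RWord [:: 0])) u -> adj 1 2 (u ++ [:: 2]) = 0.
  by move/matches_plus_star/star_sym_word=> [cs ->]; rewrite adj_interleave.
case=> /inv_cat [v [_ [Hv /inv_word -> ->]]]; first exact: Halt.
case/inv_cat: Hv => _ [u [/inv_word -> /Halt Hu ->]].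
by rewrite -catA /= adj_skip.
Qed.

Lemma typeIV_lone12 s : typeIV s -> lone12 s.
Proof.
case=> -[] /inv_cat [u [_ [Hu /inv_word -> ->]]] Hc; split => //.
- exact: suffix_suffix.
- by move: Hu => /matches_plus_star/star_sym_word [cs ->]; rewrite adj_interleave.
- exact: suffix_catr (suffix_cons _ _).
- move: Hu => /matches_plus_star/star_word_sym [cs Eu].
  by rewrite -[[:: 0; 1; 2]]/([:: 0] ++ [:: 1; 2]) catA Eu /= adj_skip // adj_interleave.
Qed.

Lemma lone0212_cat u : 2 \notin u -> lone0212 (u ++ [:: 0; 2; 1; 2]).
Proof.
move=> Hu; split; first exact: suffix_suffix.
  by rewrite count_cat (count_memPn Hu).
by rewrite adj_cat adj_sym adj_notin // -cats1 mem_cat negb_or Hu.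
Qed.

Lemma typeV_lone0212 s : typeV s -> lone0212 s.
Proof.
case=> H; invert_matches; first by apply: lone0212_cat; exact: notin_rep2.
rewrite rep_Sr -catA (catA _ [:: 1]); apply: lone0212_cat.
by rewrite mem_cat negb_or notin_rep2.
Qed.

Lemma typeVI_not_tight s : typeVI s -> ~ tight s.
Proof.
case=> H; invert_matches; move=> Hs.
- have Ht : tight (rev (rep [:: 2; 0] k0.+1) ++ 1 :: (rep [:: 2; 0] k ++ [:: 2])).
    apply: tight_first_move; first by move: Hs; rewrite -!catA.
      exact: notin_rep2.
    by rewrite mem_cat negb_or notin_rep2.
  have := (tight_adj Ht).2; rewrite adj_split !adj_cons_eq0 //.
  + by move: Hs Ht; case: k.
  + by right; rewrite mem_cat negb_or notin_rep2.
  + by right; exact: notin_rep2.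
- have Ht : tight (rev (rep [:: 2; 1] k0.+1) ++ 0 :: (rep [:: 2; 1] k ++ [:: 2])).
    apply: tight_first_move; first by move: Hs; rewrite -!catA.
      exact: notin_rep2.
    by rewrite mem_cat negb_or notin_rep2.
  have := (tight_adj Ht).2; rewrite adj_split !adj_cons_eq0 //.
  + by move: Hs Ht; case: k.
  + by left; rewrite mem_cat negb_or notin_rep2.
  + by left; exact: notin_rep2.
Qed.

Lemma typeVII_not_tight s : typeVII s -> ~ tight s.
Proof.
rewrite /typeVII => H; invert_matches; move=> Hs.
have Ht : tight (rev (rep [:: 0; 2] k0.+1) ++ 1 :: rep [:: 0; 2] k.+1).
  by apply: tight_first_move; [move: Hs; rewrite -!catA | exact: notin_rep2 | exact: notin_rep2].
have := (tight_adj Ht).1; rewrite adj_split !adj_cons_eq0 //; by left; exact: notin_rep2.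
Qed.

Lemma typeVIII_not_tight s : typeVIII s -> ~ tight s.
Proof.
rewrite /typeVIII => H; invert_matches; move=> Hs.
have Ht : tight (rev (rep [:: 0; 2] k.+1) ++ 1 :: [:: 2]).
  by apply: tight_first_move; [move: Hs; rewrite -!catA | exact: notin_rep2 | ].
apply: (tight_not_lone12 Ht); split; first exact: suffix_suffix.
  by rewrite adj_split adj_cons_eq0 //; left; exact: notin_rep2.
by rewrite count_cat count_rev /=; lia.
Qed.

Fixpoint tightb (n : nat) (s : seq nat) : bool :=
  if s == [:: 0; 1; 2] then true else
  if n is n'.+1 then
    if s is a :: w then
      has (fun j => if nth 0 w j == a then tightb n' (rev (take j w) ++ a :: drop j.+1 w)
                    else false) (iota 0 (size w))
    else false
  else false.

Lemma tight_tightb s : tight s -> tightb (size s) s.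
Proof.
elim=> [|a x y _ IH] //.
have -> : size (a :: x ++ a :: y) = (size (rev x ++ a :: y)).+1.
  by rewrite /= !size_cat size_rev.
rewrite /=; case: ifP => // _; apply/hasP; exists (size x).
  by rewrite mem_iota size_cat /=; lia.
rewrite nth_cat ltnn subnn /= eqxx take_size_cat //.
suff -> : drop (size x).+1 (x ++ a :: y) = y by [].
by clear IH; elim: x => [|b x IHx] //=; rewrite drop0.
Qed.

Lemma typeIX_not_tight s : typeIX s -> ~ tight s.
Proof.
have : all (fun s => ~~ tightb (size s) s) type9_strings by vm_compute.
by move=> /allP /[apply] /negP Hn /tight_tightb.
Qed.

Lemma bad_not_tight s : bad s -> ~ tight s.
Proof.
case=> _ [_ [_ [H|[H|[H|[H|[H|[H|[H|[H|H]]]]]]]]]] Hs.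
- exact: typeI_not_tight H Hs.
- by have [_] := tight_adj Hs; rewrite typeII_adj.
- by have [] := tight_adj Hs; rewrite typeIII_adj.
- exact: tight_not_lone12 Hs (typeIV_lone12 H).
- exact: tight_not_lone0212 Hs (typeV_lone0212 H).
- exact: typeVI_not_tight H Hs.
- exact: typeVII_not_tight H Hs.
- exact: typeVIII_not_tight H Hs.
- exact: typeIX_not_tight H Hs.
Qed.

Fixpoint sortsb (k : nat) (s : seq nat) : bool :=
  if k is k'.+1 then has (fun i => sortsb k' (flip i s)) (iota 1 (size s))
  else s == [:: 0; 1; 2].

Lemma sortsb_sound k s : sortsb k s -> sorts_in k s.
Proof.
elim: k s => [|k IH] s /=; first by move/eqP->; exists [::].
case/hasP=> i; rewrite mem_iota => Hi /IH; apply: sorts_in_flip; lia.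
Qed.

Fixpoint ternary_words (n : nat) : seq (seq nat) :=
  if n is n'.+1 then
    [seq c :: w | c <- [:: 0; 1; 2], w <- ternary_words n']
  else [:: [::]].

Lemma mem_ternary_words s : all (fun c => c < 3) s -> s \in ternary_words (size s).
Proof.
elim: s => [|c s IH] // /andP[Hc /IH Hw].
by apply: (allpairs_f (fun c w => c :: w)) => //; rewrite !inE; lia.
Qed.

Lemma small_sorts_in s : normal s -> fully_ternary s -> last 0 s = 2 ->
  s <> [:: 0; 2; 1; 2] -> size s <= 6 -> sorts_in (size s - 2) s.
Proof.
move=> Hn Hft Hl Hne Hs6; apply: sortsb_sound.
have Hcheck : forall n, n <= 6 -> all (fun s =>
    [&& normal s, 0 \in s, 1 \in s, 2 \in s, last 0 s == 2 & s != [:: 0; 2; 1; 2]]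
    ==> sortsb (size s - 2) s) (ternary_words n).
  by case=> [|[|[|[|[|[|[|n]]]]]]] //; vm_compute.
have Hall : all (fun c => c < 3) s by apply/allP => c Hc; rewrite -Hft.
move: (allP (Hcheck _ Hs6) s (mem_ternary_words Hall)).
by rewrite Hn !Hft Hl eqxx /=; move/eqP: Hne => /negbTE ->.
Qed.

Arguments rep w k : simpl never.

Lemma path_rep (p q c : nat) k : p != q -> c != p ->
  path (fun a b : nat => a != b) c (rep [:: p; q] k).
Proof. by move=> Hpq; elim: k c => [|k IH] c Hc //=; rewrite Hc Hpq /= IH // eq_sym. Qed.

Lemma two_letter_shape (p q : nat) w : p != q -> normal w ->
  all (fun c => (c == p) || (c == q)) w -> last p w = q ->
  exists k, w = rep [:: p; q] k \/ w = q :: rep [:: p; q] k.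
Proof.
move=> Hpq; elim: w => [|c w IH] /=; first by move=> _ _ E; rewrite E eqxx in Hpq.
case: w IH => [|d w] IH Hn /andP[Hc Ha] Hl; first by exists 0; right; rewrite -Hl.
have [k [E|E]] := IH (path_sorted Hn) Ha Hl; rewrite E in Hn *.
- case: k E Hn => [//|k] E; rewrite rep_S /= => /andP[Hcp _].
  by exists k.+1; right; move: Hc Hcp => /orP[] /eqP -> //; rewrite eqxx.
- move: Hn => /= /andP[Hcq _].
  by exists k.+1; left; move: Hc Hcq => /orP[] /eqP -> //; rewrite eqxx.
Qed.

Lemma tight_012_rep02 m :
  tight [:: 0, 1, 2 & rep [:: 0; 2] m] /\ tight [:: 2, 1 & rep [:: 0; 2] m.+1].
Proof.
elim: m => [|m [_ IH]].
  by split; [exact: tight012 | exact: (@tight_move 2 [:: 1; 0] [::] tight012)].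
have H := @tight_move 0 [:: 1; 2] _ IH.
by split => //; exact: (@tight_move 2 [:: 1; 0] _ H).
Qed.

Lemma tight_20_rep12 m :
  tight [:: 2, 0 & rep [:: 1; 2] m.+2] /\ tight [:: 1, 0, 2 & rep [:: 1; 2] m.+2].
Proof.
have H0 : tight [:: 2; 0; 1; 2; 1; 2].
  apply: (@tight_move 2 [:: 0; 1; 2; 1] [::]); apply: (@tight_move 1 [:: 2] [:: 0; 2]).
  exact: (@tight_move 2 [:: 1; 0] [::] tight012).
elim: m => [|m [_ IH]]; first by split => //; exact: (@tight_move 1 [:: 0; 2] [:: 2; 1; 2] H0).
have H := @tight_move 2 [:: 0; 1] _ IH.
by split => //; exact: (@tight_move 1 [:: 0; 2] _ H).
Qed.

Lemma sorts_in_swap_tight a b r : normal [:: b, a & r] -> tight [:: b, a & r] ->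
  sorts_in (size r) [:: a, b & r].
Proof.
move=> Hn Ht; have := tight_size Ht; rewrite /= => H3.
rewrite (_ : size r = (size r - 1).+1); last lia.
apply: (@sorts_in_flip 2) => //.
rewrite /flip /= take0 drop0 normalize_id //.
by rewrite (_ : size r - 1 = size [:: b, a & r] - 3); [exact: tight_sorts_in | rewrite /=; lia].
Qed.

Lemma sorts_in_unique_head a w : normal (a :: w) -> fully_ternary (a :: w) ->
  last a w = 2 -> a \notin w -> 6 <= size w -> sorts_in (size w).-1 (a :: w).
Proof.
move=> Hn Hft Hl Haw Hsz.
have Ha2 : a != 2.
  apply: contraNneq Haw => ->; rewrite -[X in X \in _]Hl.
  by case: w Hsz {Hn Hft Hl} => // c w _; exact: mem_last.
have Ha3 : a < 3 by rewrite -Hft mem_head.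
have Hshape p : p != a -> p != 2 -> p < 3 ->
    exists k, w = rep [:: p; 2] k \/ w = 2 :: rep [:: p; 2] k.
  move=> Hpa Hp2 Hp3; apply: two_letter_shape => //; first exact: path_sorted Hn.
  - apply/allP => c Hc; have : c < 3 by rewrite -Hft inE Hc orbT.
    have : c != a by apply: contraNneq Haw => <-.
    lia.
  - by case: w Hsz Hl {Hn Hft Haw}.
case: a Ha2 Ha3 Hn Hft Hl Haw Hshape => [|[|[|//]]] // _ _ Hn _ _ _ Hshape.
- have [k [|] Ew] := Hshape 1 isT isT isT; subst w; rewrite /= size_rep /= in Hsz *.
  + have [m ->] : exists m, k = m.+3 by exists (k - 3); lia.
    rewrite rep_S (_ : _.-1 = size (2 :: rep [:: 1; 2] m.+2)); last by rewrite /= size_rep /=; lia.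
    by apply: sorts_in_swap_tight; [rewrite /= path_rep | exact: (tight_20_rep12 m).2].
  + have [m ->] : exists m, k = m.+3 by exists (k - 3); lia.
    rewrite (_ : 2 * m.+3 = size (rep [:: 1; 2] m.+3)); last by rewrite size_rep /=; lia.
    by apply: sorts_in_swap_tight; [rewrite /= path_rep | exact: (tight_20_rep12 m.+1).1].
- have [k [|] Ew] := Hshape 0 isT isT isT; subst w; rewrite /= size_rep /= in Hsz *.
  + have [m ->] : exists m, k = m.+1 by exists (k - 1); lia.
    rewrite rep_S (_ : _.-1 = size (2 :: rep [:: 0; 2] m)); last by rewrite /= size_rep /=; lia.
    by apply: sorts_in_swap_tight; [rewrite /= path_rep | exact: (tight_012_rep02 m).1].
  + have [m ->] : exists m, k = m.+1 by exists (k - 1); lia.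
    rewrite (_ : 2 * m.+1 = size (rep [:: 0; 2] m.+1)); last by rewrite size_rep /=; lia.
    by apply: sorts_in_swap_tight; [rewrite /= path_rep | exact: (tight_012_rep02 m).2].
Qed.

Lemma fully_ternary_move a x y :
  fully_ternary (a :: x ++ a :: y) -> fully_ternary (rev x ++ a :: y).
Proof.
move=> Hft z; rewrite -Hft mem_cat mem_rev !inE mem_cat inE.
by case: (z == a); case: (z \in x).
Qed.

Lemma sorts_in_size_sub2 s : normal s -> fully_ternary s -> last 0 s = 2 ->
  s <> [:: 0; 2; 1; 2] -> sorts_in (size s - 2) s.
Proof.
elim: {s}(size s) {-2}s (leqnn (size s)) => [|n IH] s Hsz Hn Hft Hl Hne.
  by apply: small_sorts_in => //; lia.
have [Hs6|Hs7] := leqP (size s) 6; first exact: small_sorts_in.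
case: s Hsz Hn Hft Hl Hne Hs7 => [//|a w] Hsz Hn Hft Hl Hne Hs7.
have [Haw|Haw] := boolP (a \in w); last first.
  by rewrite subn2 /=; apply: sorts_in_unique_head.
have [x [y Ew]] : exists x y, w = x ++ a :: y.
  exists (take (index a w) w), (drop (index a w).+1 w).
  by rewrite -{1}(cat_take_drop (index a w) w) (drop_nth a) ?index_mem ?nth_index.
subst w.
have Hsize : size (a :: x ++ a :: y) = (size (rev x ++ a :: y)).+1.
  by rewrite /= !size_cat size_rev.
rewrite Hsize subSn; last by move: Hs7; rewrite Hsize; lia.
apply: (@sorts_in_flip (size x).+1); first by rewrite /= size_cat /=; lia.
rewrite flip_move //; apply: IH.
- by move: Hsz; rewrite Hsize.
- exact: normal_move.
- exact: fully_ternary_move.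
- by move: Hl; rewrite /= !last_cat.
- by move=> Et; move: Hs7; rewrite Hsize Et.
Qed.

Theorem lemma4p5 (s : seq nat) :
  bad s -> s <> [:: 0; 2; 1; 2] ->
  sorting_distance_is s (size s - 2).
Proof.
move=> Hbad Hne; have [Hn [Hft [Hl _]]] := Hbad.
split; first exact: sorts_in_size_sub2.
move=> k [idx [<- Hidx]].
have [Hle Htight] := apply_flips_size Hn Hidx.
case: (ltnP (size s) (size idx + 3)) => Hlt; first lia.
by case: (bad_not_tight Hbad); apply: Htight; lia.
Qed.
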